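(* For any $E_1,E_2\in\mathfrak g$ there exist polynomials $\tilde\alpha_k(x_1,x_2)\in\mathbb C[x_1,x_2]$, $k=0,\dots,(\dim\mathfrak g)^2$, not all zero, such that $$\sum_{k=0}^{(\dim\mathfrak g)^2}\tilde\alpha_k(x_1,x_2)\frac{\partial^k}{\partial x_1^k}W_2(x_1.E_1,x_2.E_2)=0$$ for all $x_1\neq x_2$ in $U$.
   Context: Let $G\subset GL(r,\mathbb C)$ be a complex reductive Lie group given in a faithful matrix representation, with Lie algebra $\mathfrak g\subset\mathfrak{gl}(r,\mathbb C)$; ${\rm Tr}$ denotes the matrix trace. Let $\mathcal D(x)$ be an $r\times r$ matrix with rational entries in $x$, $\mathcal D(x)\in\mathfrak g$. Let $\Psi(x)$ be a holomorphic $G$-valued solution of $\frac{d}{dx}\Psi=\mathcal D\Psi$ on a simply connected domain $U\subset\mathbb C$ avoiding the poles of $\mathcal D$. For $x\in U$, $E\in\mathfrak g$, write $x.E$ for the pair and $M(x.E)=\Psi(x)E\Psi(x)^{-1}$. For $X_i=x_i.E_i$ with $x_1\ne x_2$ define $W_2(X_1,X_2)=\frac{1}{(x_1-x_2)^2}{\rm Tr}\,M(X_1)M(X_2)$. *)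

From HB Require Import structures.
From mathcomp Require Import all_boot all_order all_algebra.
From mathcomp Require Import complex.
From mathcomp Require Import all_classical all_reals all_analysis.
Set Implicit Arguments. Unset Strict Implicit. Unset Printing Implicit Defensive.
Import Order.TTheory GRing.Theory Num.Theory numFieldNormedType.Exports.
Local Open Scope ring_scope.
Local Open Scope classical_set_scope.

(* The complex numbers, as R[i] for a real field R : realType, viewed as a
   normed module over itself (the "regular" copy ^o carries the normed
   structure needed by MathComp-Analysis' derivative). *)
Definition cplx (R : realType) := (R[i])^o.

Section Defs.
Variable R : realType.
Local Notation C := (cplx R).
Variable r : nat.

Definition unit_interval : set R := [set t | 0 <= t <= 1].

Definition domain (U : set C) : Prop := U !=set0 /\ open U /\ connected U.

Definition simply_connected (U : set C) : Prop :=
  connected U /\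
  forall gam : R -> C,
    {within unit_interval, continuous gam} -> gam 0 = gam 1 ->
    gam @` unit_interval `<=` U ->
    exists H : R * R -> C,
      {within unit_interval `*` unit_interval, continuous H} /\
      (forall s, unit_interval s -> H (s, 0) = gam s /\ H (s, 1) = gam 0) /\
      (forall t, unit_interval t -> H (0, t) = gam 0 /\ H (1, t) = gam 0) /\
      H @` (unit_interval `*` unit_interval) `<=` U.

Definition matrix_group (G : set 'M[C]_r) : Prop :=
  [/\ G 1%:M,
      (forall A, G A -> A \in unitmx),
      (forall A B, G A -> G B -> G (A *m B)) &
      (forall A, G A -> G (invmx A))].

(* G is closed in GL(r, C) (hence, by Cartan, a Lie subgroup). *)
Definition closed_in_GL (G : set 'M[C]_r) : Prop :=
  forall A, A \in unitmx -> closure G A -> G A.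

Definition lie_algebra_of (G : set 'M[C]_r) (g : {vspace 'M[C]_r}) : Prop :=
  forall X : 'M[C]_r,
    X \in g <->
    exists gam : C -> 'M[C]_r,
      [/\ gam 0 = 1%:M, (\forall t \near (0 : C), G (gam t)),
          derivable gam 0 1 & derive1 gam 0 = X].

(* Reductivity, expressed as complete reducibility of the defining
   representation: every G-invariant subspace of C^r has a G-invariant
   complement. *)
Definition invariant_subspace (G : set 'M[C]_r) (W : {vspace 'cV[C]_r}) :=
  forall A v, G A -> v \in W -> A *m v \in W.

Definition reductive_rep (G : set 'M[C]_r) : Prop :=
  forall W, invariant_subspace G W ->
    exists W', [/\ invariant_subspace G W', (W + W')%VS = fullv
                 & (W :&: W')%VS = 0%VS].

(* D is an r x r matrix of rational functions: entry (i,j) is P i j / Q i j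
   in lowest terms; x is a pole of D iff some Q i j vanishes at x. *)
Definition pole_free (Q : 'M[{poly C}]_r) (x : C) : Prop :=
  forall i j, (Q i j).[x] != 0.

Definition rational_matrix_fun (D : C -> 'M[C]_r) (P Q : 'M[{poly C}]_r) :=
  (forall i j, Q i j != 0 /\ coprimep (P i j) (Q i j)) /\
  (forall x, pole_free Q x -> forall i j, D x i j = (P i j).[x] / (Q i j).[x]).

Definition Mop (Psi : C -> 'M[C]_r) (x : C) (E : 'M[C]_r) : 'M[C]_r :=
  Psi x *m E *m invmx (Psi x).

Definition W2 (Psi : C -> 'M[C]_r) (x1 : C) (E1 : 'M[C]_r)
  (x2 : C) (E2 : 'M[C]_r) : C :=
  \tr (Mop Psi x1 E1 *m Mop Psi x2 E2) / (x1 - x2) ^+ 2.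

End Defs.

(* Bivariate polynomials C[x1,x2] encoded as C[x2][x1]: evaluation. *)
Definition peval2 (R : realType) (p : {poly {poly cplx R}}) (x1 x2 : cplx R)
  : cplx R := (map_poly (fun q : {poly cplx R} => q.[x2]) p).[x1].

From HB Require Import structures.
From mathcomp Require Import all_boot all_order all_algebra.
From mathcomp Require Import complex.
From mathcomp Require Import all_classical all_reals all_analysis.
From mathcomp Require Import perm generic_quotient fraction ring.
Set Implicit Arguments. Unset Strict Implicit. Unset Printing Implicit Defensive.
Import Order.TTheory GRing.Theory Num.Theory numFieldNormedType.Exports.
Local Open Scope ring_scope.
Local Open Scope classical_set_scope.

(* M(x) = Psi(x) E1 Psi(x)^-1 stays in g and satisfies M' = D M - M D, so its
   coordinate vector v in a basis of g solves a linear system v' = q^-1 A v, with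
   q a common denominator of D and A a matrix of polynomials (n = dim g). As
   W2(x1, x2) = tau v(x1) / (x1 - x2)^2 for a row vector tau depending only on x2,
   the quotient rule and induction on k give
     d^k W2 / dx1^k = tau B_k(x1, x2) v(x1) / ((x1 - x2)^2 s^k),  s = q(x1) (x1 - x2),
   with matrices B_k over C[x1, x2]. Any n^2 + 1 of them are linearly dependent
   over the domain C[x1, x2]; if sum_k c_k B_k = 0, then alpha_k = c_k s^k. *)

Section scalar_derivative.
Context {K : numFieldType}.

Lemma is_derive1P {W : normedModType K} (f : K -> W) (t : K) (d : W) :
  is_derive t (1 : K) f d <-> derivable f t 1 /\ derive1 f t = d.
Proof. by rewrite derive1E; split=> [[]|[]]. Qed.

Lemma is_derive_cvgP {W : normedModType K} (f : K -> W) (t : K) (d : W) :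
  is_derive t (1 : K) f d <->
  (fun h => h^-1 *: ((f \o shift t) (h *: 1) - f t)) @ 0^' --> d.
Proof.
split=> [[df <-] //|fd].
by apply: DeriveDef; [apply/cvg_ex; exists d | exact: cvg_lim].
Qed.

Lemma is_derive_horner (p : {poly K}) t : is_derive t (1 : K) (horner p) (deriv p).[t].
Proof.
elim/poly_ind: p => [|p c IH].
  have -> : horner (0 : {poly K}) = cst 0 by apply/funext => x; rewrite horner0.
  by rewrite deriv0 horner0; exact: is_derive_cst.
have -> : horner (p * 'X + c%:P) = horner p * id + cst c.
  by apply/funext => x; rewrite !hornerE.
apply: is_derive_eq.
rewrite derivD derivM derivX derivC !hornerE.
by rewrite /GRing.scale /= mulr1 addrC mulrC.
Qed.

Lemma is_derive_div (f h : K -> K) t df dh : h t != 0 ->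
  is_derive t (1 : K) f df -> is_derive t (1 : K) h dh ->
  is_derive t (1 : K) (fun x => f x / h x) ((df * h t - f t * dh) / h t ^+ 2).
Proof.
move=> h0 fd hd.
have hVd : is_derive t (1 : K) (fun x => (h x)^-1) (- h t ^- 2 *: dh).
  apply: DeriveDef; first exact: derivableV.
  by rewrite deriveV // derive_val.
apply: is_derive_eq (is_deriveM fd hVd) _.
by rewrite /GRing.scale /=; field.
Qed.

End scalar_derivative.

Section matrix_derivative.
Context {K : numFieldType}.

Lemma cvg_mx_entryP {T : Type} (F : set_system T) {FF : Filter F} m n
    (f : T -> 'M[K]_(m, n)) (l : 'M[K]_(m, n)) :
  f @ F --> l <-> forall i j, (fun x => f x i j) @ F --> l i j.
Proof.
split=> [/cvg_ballP fl i j|fl].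
  by apply/cvg_ballP => e e0; apply: filter_app (fl e e0); near=> x => -[_ /(_ i j)].
apply/cvg_ballP => e e0.
have fle (ij : 'I_m * 'I_n) : \forall x \near F, ball (l ij.1 ij.2) e (f x ij.1 ij.2).
  exact: (cvg_ballP _ _).1 (fl ij.1 ij.2) e e0.
apply: filter_app (filter_forall _ fle); near=> x => fx.
by split=> // i j; exact: (fx (i, j)).
Unshelve. all: by end_near. Qed.

Definition is_derive_mx m n (F : K -> 'M[K]_(m, n)) (t : K) (F' : 'M[K]_(m, n)) :=
  forall i j, is_derive t (1 : K) (fun x => F x i j) (F' i j).

Lemma is_derive_mxP m n (F : K -> 'M[K]_(m, n)) t F' :
  is_derive_mx F t F' <-> is_derive t (1 : K) F F'.
Proof.
rewrite is_derive_cvgP cvg_mx_entryP.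
have quotE i j : (fun h : K => (h^-1 *: ((F \o shift t) (h *: 1) - F t)) i j) =
    (fun h : K => h^-1 *: (((fun x => F x i j) \o shift t) (h *: 1) - F t i j)).
  by apply/funext => h; rewrite !mxE.
by split=> dF i j; have := dF i j; rewrite ?quotE is_derive_cvgP ?quotE.
Qed.

Lemma near_eq_is_derive_mx m n (F H : K -> 'M[K]_(m, n)) t F' :
  (\forall x \near t, F x = H x) -> is_derive_mx F t F' -> is_derive_mx H t F'.
Proof.
move=> FH dF i j; apply: near_eq_is_derive (dF i j).
by near=> x; rewrite (near FH x).
Unshelve. all: by end_near. Qed.

Lemma is_derive_mx_unique m n (F : K -> 'M[K]_(m, n)) t F1 F2 :
  is_derive_mx F t F1 -> is_derive_mx F t F2 -> F1 = F2.
Proof.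
move=> dF1 dF2; apply/matrixP => i j.
by rewrite -(dF1 i j).(derive_val) (dF2 i j).(derive_val).
Qed.

Lemma is_derive_mx_cst m n (A : 'M[K]_(m, n)) t : is_derive_mx (fun=> A) t 0.
Proof. by move=> i j; rewrite mxE; exact: is_derive_cst. Qed.

Lemma is_derive_mx_mul m n p (F : K -> 'M[K]_(m, n)) (H : K -> 'M[K]_(n, p)) t F' H' :
  is_derive_mx F t F' -> is_derive_mx H t H' ->
  is_derive_mx (fun x => F x *m H x) t (F' *m H t + F t *m H').
Proof.
move=> dF dH i j.
have -> : (fun x => (F x *m H x) i j) = \sum_(k < n) (fun x => F x i k * H x k j).
  by apply/funext => x; rewrite mxE fct_sumE.
apply: is_derive_eq; first exact: is_derive_sum (fun k => is_deriveM (dF i k) (dH k j)).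
rewrite !mxE -big_split; apply: eq_bigr => k _ /=.
by rewrite /GRing.scale /= addrC mulrC [H t k j * _]mulrC.
Qed.

Lemma is_derive_mx_scalar m n (L : {scalar 'M[K]_(m, n)}) (F : K -> 'M[K]_(m, n)) t F' :
  is_derive_mx F t F' -> is_derive t (1 : K) (fun x => L (F x)) (L F').
Proof.
move=> dF.
have LE (X : 'M[K]_(m, n)) :
    L X = \sum_(ij : 'I_m * 'I_n) X ij.1 ij.2 * L (delta_mx ij.1 ij.2).
  rewrite {1}(matrix_sum_delta X) pair_bigA linear_sum /=.
  by apply: eq_bigr => -[i j] _; rewrite linearZ.
have -> : (fun x => L (F x)) =
    \sum_(ij : 'I_m * 'I_n) (fun x => F x ij.1 ij.2 * L (delta_mx ij.1 ij.2)).
  by apply/funext => x; rewrite LE fct_sumE.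
rewrite LE; elim/big_ind2 : _ => [|f1 d1 f2 d2|[i j] _].
- exact: is_derive_cst.
- exact: is_deriveD.
- apply: is_derive_eq (is_deriveM (dF i j) (is_derive_cst (L (delta_mx i j)) t 1)) _.
  by rewrite scaler0 add0r /GRing.scale /= mulrC.
Qed.

Lemma derivable_det n (F : K -> 'M[K]_n) t :
  (forall i j, derivable (fun x => F x i j) t 1) ->
  derivable (fun x => \det (F x)) t 1.
Proof.
move=> dF.
have -> : (fun x => \det (F x)) =
    \sum_(s : 'S_n) (cst ((-1) ^+ s) * \prod_i (fun x => F x i (s i))).
  by apply/funext => x; rewrite fct_sumE; apply: eq_bigr => s _; rewrite fct_prodE.
apply: (big_ind (fun f => derivable f t 1)) => [|f h|s _].
- exact: derivable_cst.
- exact: derivableD.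
apply: derivableM; first exact: derivable_cst.
apply: (big_ind (fun f => derivable f t 1)) => [|f h|i _].
- exact: derivable_cst.
- exact: derivableM.
exact: dF.
Qed.

Lemma is_derive_mx_inv n (F : K -> 'M[K]_n) t F' :
  (\forall x \near t, F x \in unitmx) -> is_derive_mx F t F' ->
  is_derive_mx (fun x => invmx (F x)) t (- (invmx (F t) *m F' *m invmx (F t))).
Proof.
move=> Fu dF.
(* Cramer's rule gives derivability; differentiating F x *m invmx (F x) = 1
   then gives the value. *)
have Ftu : F t \in unitmx := nbhs_singleton Fu.
pose Phi x := (\det (F x))^-1 *: \adj (F x).
have dPhi i j : derivable (fun x => Phi x i j) t 1.
  have -> : (fun x => Phi x i j) = (fun x => (\det (F x))^-1) *
      (fun x => (-1) ^+ (j + i) * \det (row' j (col' i (F x)))).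
    by apply/funext => x; rewrite /Phi !mxE.
  apply: derivableM.
    apply: derivableV; first by rewrite -unitfE -unitmxE.
    by apply: derivable_det => a b; exact: (dF a b).(ex_derive).
  apply: derivableM; first exact: derivable_cst.
  apply: derivable_det => a b.
  by under eq_fun do rewrite !mxE; exact: (dF _ _).(ex_derive).
pose Phi' := \matrix_(i, j) 'D_1 (fun x => Phi x i j) t.
have dinv : is_derive_mx (fun x => invmx (F x)) t Phi'.
  apply: (@near_eq_is_derive_mx _ _ Phi).
    by near=> x; rewrite /Phi /invmx (near Fu x).
  by move=> i j; rewrite mxE; exact: derivableP.
have dFinv : is_derive_mx (fun x => F x *m invmx (F x)) t 0.
  apply: (@near_eq_is_derive_mx _ _ (fun=> 1%:M)); last exact: is_derive_mx_cst.
  by near=> x; rewrite mulmxV // (near Fu x).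
suff <- : Phi' = - (invmx (F t) *m F' *m invmx (F t)) by [].
have /eqP := is_derive_mx_unique (is_derive_mx_mul dF dinv) dFinv.
rewrite addr_eq0 => /eqP /(congr1 (mulmx (invmx (F t)))).
by rewrite mulmxN [in RHS]mulmxA mulVmx // mul1mx mulmxA => ->; rewrite opprK.
Unshelve. all: by end_near. Qed.

End matrix_derivative.

Section idomain_dependence.
Variable A : idomainType.

Lemma tofrac_clear_denom (x : {fraction A}) :
  exists d, d != 0 /\ exists a, x * tofrac d = tofrac a.
Proof.
elim/quotW: x => r.
exists (fraction.frac r).2; split; first exact: denom_ratioP.
exists (fraction.frac r).1; rewrite /FracField.tofrac; unlock => /=.
rewrite -[_ * _]FracField.pi_mul; apply/eqmodP; rewrite /= FracField.equivfE.
by rewrite !numden_Ratio ?mulr1 ?oner_neq0 ?denom_ratioP // mulrC.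
Qed.

Lemma tofrac_common_denom (I : finType) (x : I -> {fraction A}) :
  exists2 d, d != 0 & forall i, exists a, x i * tofrac d = tofrac a.
Proof.
have [d dP] := fin_all_exists (fun i => tofrac_clear_denom (x i)).
exists (\prod_i d i); first by apply/prodf_neq0 => i _; case: (dP i).
move=> i; have [_ [a xa]] := dP i; exists (a * \prod_(j | j != i) d j).
by rewrite (bigD1 i) //= !tofracM mulrA xa.
Qed.

Lemma idomain_rV_dependent N d (v : 'I_N -> 'rV[A]_d) : (d < N)%N ->
  exists c : 'I_N -> A, (exists k, c k != 0) /\ \sum_k c k *: v k = 0.
Proof.
move=> dN.
pose M : 'M[{fraction A}]_(N, d) := \matrix_(k, j) tofrac (v k 0 j).
have : kermx M != 0.
  by rewrite kermx_eq0; apply: contraTN dN => /eqP <-; rewrite -leqNgt rank_leq_col.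
case/rowV0Pn => u /sub_kermxP uM u0.
have [D D0 /fin_all_exists[c Dc]] := tofrac_common_denom (fun k => u 0 k).
exists c; split.
  have [k uk] : exists k, u 0 k != 0.
    apply/existsP; apply: contraNT u0 => /existsPn u0.
    by apply/eqP/rowP => k; rewrite mxE; exact/eqP/negbNE/u0.
  by exists k; rewrite -[c k == 0]tofrac_eq0 -Dc mulf_neq0 ?tofrac_eq0.
apply/rowP => j; apply/eqP; rewrite !mxE summxE -[_ == 0]tofrac_eq0 rmorph_sum /=.
have -> : \sum_k tofrac ((c k *: v k) 0 j) = tofrac D * (u *m M) 0 j.
  rewrite mxE mulr_sumr; apply: eq_bigr => k _.
  by rewrite !mxE tofracM -Dc mulrCA mulrA.
by rewrite uM mxE mulr0.
Qed.

Lemma idomain_mx_dependent N m n (B : 'I_N -> 'M[A]_(m, n)) : (m * n < N)%N ->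
  exists c : 'I_N -> A, (exists k, c k != 0) /\ \sum_k c k *: B k = 0.
Proof.
move=> mnN; have [c [nz0 Bc]] := idomain_rV_dependent (fun k => mxvec (B k)) mnN.
exists c; split=> //; apply: (can_inj mxvecK).
rewrite linear_sum linear0 -[RHS]Bc; apply: eq_bigr => k _; exact: linearZ.
Qed.

End idomain_dependence.

Lemma near_neq (K : numFieldType) (y a : K) : y != a -> \forall x \near y, x != a.
Proof.
move=> ya; exists `|y - a|; first by rewrite /= normr_gt0 subr_eq0.
by move=> x /= yx; apply: contraTneq yx => ->; rewrite ltxx.
Qed.

Definition eval2 (K : comNzRingType) (x1 x2 : K) : {rmorphism {poly {poly K}} -> K} :=
  horner_eval x1 \o map_poly (horner_eval x2).

Section eval2.
Variable K : numFieldType.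
Implicit Types p : {poly {poly K}}.

Lemma eval2_polyC (p : {poly K}) (x1 x2 : K) : eval2 x1 x2 p^:P = p.[x1].
Proof.
rewrite /eval2 /= -map_poly_comp map_poly_id // => c _ /=.
by rewrite /horner_eval hornerC.
Qed.

Lemma eval2_XsubY (x1 x2 : K) : eval2 x1 x2 ('X - 'Y) = x1 - x2.
Proof. by rewrite /eval2 /= map_polyXsubC /= /horner_eval hornerXsubC hornerX. Qed.

Lemma is_derive_eval2 p (x2 y : K) :
  is_derive y (1 : K) (fun x => eval2 x x2 p) (eval2 y x2 (deriv p)).
Proof.
apply: is_derive_eq; first exact: is_derive_horner.
by rewrite deriv_map.
Qed.

Lemma is_derive_mx_eval2 m n (B : 'M[{poly {poly K}}]_(m, n)) (x2 y : K) :
  is_derive_mx (fun x => map_mx (eval2 x x2) B) y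
    (map_mx (eval2 y x2) (map_mx deriv B)).
Proof.
move=> i j; rewrite !mxE.
under eq_fun do rewrite mxE.
exact: is_derive_eval2.
Qed.

End eval2.

Section rational_linear_system.
Variables (K : numFieldType) (n : nat) (q : {poly K}) (A : 'M[{poly K}]_n).
Variables (V : set K) (v : K -> 'cV[K]_n).
Hypothesis V_open : open V.
Hypothesis q_neq0 : q != 0.
Hypothesis q_V : forall y, V y -> q.[y] != 0.
Hypothesis v_ode : forall y, V y ->
  is_derive_mx v y (q.[y]^-1 *: (map_mx (horner_eval y) A *m v y)).

Local Notation AA := {poly {poly K}}.
Local Notation xsub := ('X - 'Y : AA).
Local Notation Ap := (map_mx (map_poly polyC) A).

Definition den : AA := q^:P * xsub.
Definition denom k : AA := xsub ^+ 2 * den ^+ k.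
Definition den_dlog_denom k : AA := 2%:R * q^:P + k%:R * deriv den.

(* Chosen so that the quotient rule takes contract (numer_mx k) / denom k to
   contract (numer_mx k.+1) / denom k.+1, see is_derive_closed_form. *)
Fixpoint numer_mx k : 'M[AA]_n :=
  if k is k'.+1 then
    den *: map_mx deriv (numer_mx k') + xsub *: (numer_mx k' *m Ap)
      - den_dlog_denom k' *: numer_mx k'
  else 1%:M.

Lemma den_neq0 : den != 0.
Proof.
by rewrite mulf_neq0 ?map_polyC_eq0 // -size_poly_eq0 size_XsubC.
Qed.

Lemma eval2_den x1 x2 : eval2 x1 x2 den = q.[x1] * (x1 - x2).
Proof. by rewrite rmorphM eval2_polyC eval2_XsubY. Qed.

Lemma denomS k : denom k.+1 = denom k * den.
Proof. by rewrite /denom [den ^+ _.+1]exprSr mulrA. Qed.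

Lemma den_mul_deriv_denom k : den * deriv (denom k) = denom k * den_dlog_denom k.
Proof.
rewrite /denom /den_dlog_denom /den derivM !deriv_exp derivXsubC; move: (deriv _) => d.
by case: k => [|k]; last (rewrite [_ ^+ k.+1]exprS; move: (_ ^+ k) => p); ring.
Qed.

Section contraction.
Variables (tau : 'rV[K]_n) (x2 : K).

Definition contract (B : 'M[AA]_n) y :=
  (tau *m map_mx (eval2 y x2) B *m v y) 0 0.

Definition closed_form k y := contract (numer_mx k) y / eval2 y x2 (denom k).

Lemma contract_sum m (c : 'I_m -> AA) (B : 'I_m -> 'M[AA]_n) y :
  contract (\sum_k c k *: B k) y = \sum_k eval2 y x2 (c k) * contract (B k) y.
Proof.
rewrite /contract map_mx_sum mulmx_sumr mulmx_suml summxE.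
by apply: eq_bigr => k _; rewrite map_mxZ -scalemxAr -scalemxAl mxE.
Qed.

Lemma contract_numer_mxS k y :
  contract (numer_mx k.+1) y =
    eval2 y x2 den * contract (map_mx deriv (numer_mx k)) y
    + (y - x2) * contract (numer_mx k *m Ap) y
    - eval2 y x2 (den_dlog_denom k) * contract (numer_mx k) y.
Proof.
rewrite /contract /= map_mxB map_mxD !map_mxZ eval2_XsubY.
rewrite mulmxBr mulmxDr !mulmxBl !mulmxDl -!scalemxAr -!scalemxAl.
by rewrite !mxE.
Qed.

Lemma is_derive_contract B y : V y ->
  is_derive y (1 : K) (contract B)
    (contract (map_mx deriv B) y + q.[y]^-1 * contract (B *m Ap) y).
Proof.
move=> Vy.
have dB := is_derive_mx_eval2 B x2 y.
apply: is_derive_eq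
  (is_derive_mx_mul (is_derive_mx_mul (is_derive_mx_cst tau y) dB) (v_ode Vy) 0 0) _.
rewrite /contract map_mxM.
have -> : map_mx (eval2 y x2) Ap = map_mx (horner_eval y) A.
  by apply/matrixP => i j; rewrite !mxE eval2_polyC.
rewrite mul0mx add0r -scalemxAr !mulmxA [in LHS]mxE.
by congr (_ + _); rewrite mxE.
Qed.

Lemma is_derive_closed_form k y : V y -> y != x2 ->
  is_derive y (1 : K) (closed_form k) (closed_form k.+1 y).
Proof.
move=> Vy yx2.
have qy := q_V Vy; have uy : y - x2 != 0 by rewrite subr_eq0.
have dy : eval2 y x2 (denom k) != 0.
  by rewrite rmorphM !rmorphXn eval2_den eval2_XsubY mulf_neq0 ?expf_neq0 ?mulf_neq0.
apply: is_derive_eq.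
  exact: (@is_derive_div _ _ (fun x => eval2 x x2 (denom k)) _ _ _ dy)
    (is_derive_contract (numer_mx k) Vy) (is_derive_eval2 (denom k) x2 y).
have den_deriv : eval2 y x2 den * eval2 y x2 (deriv (denom k)) =
    eval2 y x2 (denom k) * eval2 y x2 (den_dlog_denom k).
  by rewrite -!rmorphM den_mul_deriv_denom.
rewrite /closed_form contract_numer_mxS denomS (rmorphM (eval2 y x2) (denom k) den).
have sy : eval2 y x2 den != 0 by rewrite eval2_den mulf_neq0.
have -> : eval2 y x2 (deriv (denom k)) =
    eval2 y x2 (denom k) * eval2 y x2 (den_dlog_denom k) / eval2 y x2 den.
  by rewrite -den_deriv mulrAC divff // mul1r.
rewrite eval2_den.
by field; rewrite ?qy ?uy ?dy.
Qed.

Lemma derive1n_closed_form (f : K -> K) :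
  (forall y, V y -> y != x2 -> f y = (tau *m v y) 0 0 / (y - x2) ^+ 2) ->
  forall k y, V y -> y != x2 -> derive1n k f y = closed_form k y.
Proof.
move=> fE; elim=> [|k IH] y Vy yx2.
  rewrite derive1n0 fE // /closed_form /contract [numer_mx 0]/= map_mx1 mulmx1.
  by rewrite /denom expr0 mulr1 rmorphXn eval2_XsubY.
rewrite derive1nS derive1E -(@is_derive_closed_form k y Vy yx2).(derive_val).
apply: near_eq_derive; near=> x; apply: IH.
- by near: x; apply: open_nbhs_nbhs.
- by near: x; exact: near_neq.
Unshelve. all: by end_near. Qed.

End contraction.

Theorem rational_system_annihilator :
  exists alpha : 'I_((n ^ 2).+1) -> AA, (exists k, alpha k != 0) /\
  forall (tau : 'rV[K]_n) x2 (f : K -> K),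
    (forall y, V y -> y != x2 -> f y = (tau *m v y) 0 0 / (y - x2) ^+ 2) ->
    forall x1, V x1 -> x1 != x2 ->
    \sum_(k < (n ^ 2).+1) eval2 x1 x2 (alpha k) * derive1n k f x1 = 0.
Proof.
have nn : (n * n < (n ^ 2).+1)%N by rewrite mulnn ltnS.
have [c [[k0 ck0] cB]] :=
  idomain_mx_dependent (fun k : 'I_((n ^ 2).+1) => numer_mx k) nn.
exists (fun k => c k * den ^+ k); split.
  by exists k0; rewrite mulf_neq0 // expf_neq0 // den_neq0.
move=> tau x2 f fE x1 Vx1 x12.
have uy : x1 - x2 != 0 by rewrite subr_eq0.
transitivity (contract tau x2 (\sum_k c k *: numer_mx k) x1 / (x1 - x2) ^+ 2).
  rewrite contract_sum mulr_suml; apply: eq_bigr => k _.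
  rewrite (derive1n_closed_form fE) // /closed_form /denom !rmorphM !rmorphXn.
  rewrite eval2_den eval2_XsubY.
  by field; rewrite uy expf_neq0 ?mulf_neq0 ?q_V.
by rewrite cB /contract map_mx0 mulmx0 mul0mx mxE mul0r.
Qed.

End rational_linear_system.

Section coordinates.
Variables (K : fieldType) (r : nat) (g : {vspace 'M[K]_r}).
Local Notation n := (\dim g).
Local Notation b := (vbasis g).

Definition coords (M : 'M[K]_r) : 'cV[K]_n := \col_i coord b i M.

Definition ad_coord (X : 'M[K]_r) : 'M[K]_n :=
  \matrix_(i, j) coord b i (X *m b`_j - b`_j *m X).

Lemma ad_coord_is_linear : linear ad_coord.
Proof.
move=> a X Y; apply/matrixP => i j; rewrite !mxE.
by rewrite mulmxDl mulmxDr -scalemxAl -scalemxAr opprD addrACA -scalerBr linearP.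
Qed.

HB.instance Definition _ :=
  GRing.isLinear.Build K 'M[K]_r 'M[K]_n _ ad_coord ad_coord_is_linear.

Lemma coords_commutator X M : M \in g ->
  coords (X *m M - M *m X) = ad_coord X *m coords M.
Proof.
move=> Mg; apply/colP => i; rewrite !mxE.
rewrite {1 2}(coord_vbasis Mg) mulmx_sumr mulmx_suml -sumrB linear_sum.
by apply: eq_bigr => j _; rewrite -scalemxAr -scalemxAl -scalerBr linearZ !mxE mulrC.
Qed.

Lemma mxtrace_mul_coords M N : M \in g ->
  \tr (M *m N) = (\row_j \tr (b`_j *m N) *m coords M) 0 0.
Proof.
move=> Mg; rewrite {1}(coord_vbasis Mg) mulmx_suml linear_sum [RHS]mxE.
by apply: eq_bigr => j _; rewrite -scalemxAl linearZ !mxE mulrC.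
Qed.

Lemma ad_coord_poly (Dt : 'M[{poly K}]_r) :
  exists A : 'M[{poly K}]_n, forall y,
    map_mx (horner_eval y) A = ad_coord (map_mx (horner_eval y) Dt).
Proof.
exists (\sum_(ij : 'I_r * 'I_r)
  Dt ij.1 ij.2 *: map_mx polyC (ad_coord (delta_mx ij.1 ij.2))) => y.
rewrite [in RHS](matrix_sum_delta (map_mx _ Dt)) pair_bigA linear_sum map_mx_sum /=.
apply: eq_bigr => -[i j] _; rewrite map_mxZ linearZ !mxE /=.
by congr (_ *: _); apply/matrixP => k l; rewrite !mxE /horner_eval hornerC.
Qed.

End coordinates.

Section fundamental_solution.
Variables (R : realType) (r : nat).
Local Notation C := (cplx R).

Lemma rational_matrix_fun_common_denom (D : C -> 'M[C]_r) P Q :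
  rational_matrix_fun D P Q ->
  exists q : {poly C}, exists Dt : 'M[{poly C}]_r, q != 0 /\
    forall y, pole_free Q y ->
      q.[y] != 0 /\ D y = q.[y]^-1 *: map_mx (horner_eval y) Dt.
Proof.
move=> [Q_coprime DE].
exists (\prod_(ij : 'I_r * 'I_r) Q ij.1 ij.2).
exists (\matrix_(i, j) (P i j * \prod_(ij : 'I_r * 'I_r | ij != (i, j)) Q ij.1 ij.2)).
split=> [|y Qy]; first by apply/prodf_neq0 => ij _; case: (Q_coprime ij.1 ij.2).
have Qprod_neq0 S : \prod_(ij : 'I_r * 'I_r | S ij) (Q ij.1 ij.2).[y] != 0.
  by apply/prodf_neq0 => ij _; exact: Qy.
rewrite horner_prod; split; first exact: Qprod_neq0.
apply/matrixP => i j.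
rewrite DE // !mxE /horner_eval hornerM horner_prod (bigD1 (i, j)) //=.
by rewrite /GRing.scale /=; field; rewrite (Qy i j) Qprod_neq0.
Qed.

Variables (G : set 'M[C]_r) (g : {vspace 'M[C]_r}).
Hypothesis G_group : matrix_group G.
Hypothesis g_lie : lie_algebra_of G g.

Lemma lie_algebra_conj (Pm X : 'M[C]_r) : G Pm -> X \in g -> Pm *m X *m invmx Pm \in g.
Proof.
move=> GP /(g_lie X).1[gam [gam0 gamG dgam gamX]].
have [G1 Gu GM GV] := G_group.
have /is_derive_mxP dgam' : is_derive (0 : C) 1 gam X by apply/is_derive1P.
pose cgam t := Pm *m gam t *m invmx Pm.
have [dconj conjX] : derivable cgam 0 1 /\ derive1 cgam 0 = Pm *m X *m invmx Pm.
  apply/is_derive1P/is_derive_mxP.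
  have := is_derive_mx_mul (is_derive_mx_mul (is_derive_mx_cst Pm 0) dgam')
    (is_derive_mx_cst (invmx Pm) 0).
  by rewrite mul0mx add0r mulmx0 addr0.
apply/(g_lie _).2; exists cgam; split=> //.
- by rewrite /cgam gam0 mulmx1 mulmxV ?Gu.
- near=> t; apply: (GM); last exact: GV.
  by apply: (GM) => //; exact: (near gamG t).
Unshelve. all: by end_near. Qed.

Variables (D : C -> 'M[C]_r) (U : set C) (Psi : C -> 'M[C]_r).
Hypothesis U_open : open U.
Hypothesis Psi_G : forall x, U x -> G (Psi x).
Hypothesis Psi_ode : forall x, U x -> derivable Psi x 1 /\ derive1 Psi x = D x *m Psi x.

Lemma Mop_in_lie_algebra E y : E \in g -> U y -> Mop Psi y E \in g.
Proof. by move=> Eg Uy; apply: lie_algebra_conj => //; exact: Psi_G. Qed.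

Lemma is_derive_Mop E y : U y ->
  is_derive_mx (Mop Psi ^~ E) y (D y *m Mop Psi y E - Mop Psi y E *m D y).
Proof.
move=> Uy; have [_ Gu _ _] := G_group.
have /is_derive_mxP dPsi : is_derive y 1 Psi (D y *m Psi y).
  by apply/is_derive1P; exact: Psi_ode.
have Psi_unit : \forall x \near y, Psi x \in unitmx.
  by near=> x; apply/Gu/Psi_G; near: x; exact: open_nbhs_nbhs.
have := is_derive_mx_mul (is_derive_mx_mul dPsi (is_derive_mx_cst E y))
  (is_derive_mx_inv Psi_unit dPsi).
rewrite /Mop mulmx0 addr0 mulmxN !mulmxA; congr is_derive_mx; congr (_ - _).
by rewrite -[LHS]mulmxA mulmxV ?mulmx1 //; exact/Gu/Psi_G.
Unshelve. all: by end_near. Qed.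

Lemma is_derive_coords_Mop E y : E \in g -> U y ->
  is_derive_mx (fun x => coords g (Mop Psi x E)) y
    (ad_coord g (D y) *m coords g (Mop Psi y E)).
Proof.
move=> Eg Uy; rewrite -coords_commutator ?Mop_in_lie_algebra // => i j; rewrite mxE.
under eq_fun do rewrite mxE.
exact: is_derive_mx_scalar (is_derive_Mop E Uy).
Qed.

End fundamental_solution.

Theorem mainTheorem3 (R : realType) (r : nat)
  (G : set 'M[cplx R]_r) (g : {vspace 'M[cplx R]_r})
  (P Q : 'M[{poly cplx R}]_r) (D : cplx R -> 'M[cplx R]_r)
  (U : set (cplx R)) (Psi : cplx R -> 'M[cplx R]_r) :
  matrix_group G -> closed_in_GL G -> lie_algebra_of G g -> reductive_rep G ->
  rational_matrix_fun D P Q ->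
  (forall x, pole_free Q x -> D x \in g) ->
  domain U -> simply_connected U ->
  (forall x, U x -> pole_free Q x) ->
  (forall x, U x -> G (Psi x)) ->
  (forall x, U x -> derivable Psi x 1 /\ derive1 Psi x = D x *m Psi x) ->
  forall E1 E2 : 'M[cplx R]_r, E1 \in g -> E2 \in g ->
  exists alpha : 'I_((\dim g ^ 2)%N.+1) -> {poly {poly cplx R}},
    (exists k, alpha k != 0) /\
    forall x1 x2 : cplx R, U x1 -> U x2 -> x1 != x2 ->
      \sum_(k < (\dim g ^ 2)%N.+1)
         peval2 (alpha k) x1 x2 * derive1n k (fun y => W2 Psi y E1 x2 E2) x1
      = 0.
Proof.
move=> G_group _ g_lie _ D_rat _ U_dom _ U_pole Psi_G Psi_ode E1 E2 E1g _.
have U_open : open U := U_dom.2.1.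
have [q [Dt [q_neq0 DE]]] := rational_matrix_fun_common_denom D_rat.
have [A AE] := ad_coord_poly g Dt.
pose v x := coords g (Mop Psi x E1).
have v_ode y : U y -> is_derive_mx v y (q.[y]^-1 *: (map_mx (horner_eval y) A *m v y)).
  move=> Uy; have [_ Dy] := DE y (U_pole y Uy).
  rewrite AE scalemxAl -linearZ -Dy.
  exact (is_derive_coords_Mop G_group g_lie U_open Psi_G Psi_ode E1g Uy).
have q_U y : U y -> q.[y] != 0 by move=> Uy; case: (DE y (U_pole y Uy)).
have [alpha [alpha_neq0 alpha_ann]] :=
  rational_system_annihilator U_open q_neq0 q_U v_ode.
exists alpha; split=> // x1 x2 Ux1 _ x12.
apply: (alpha_ann (\row_j \tr ((vbasis g)`_j *m Mop Psi x2 E2)) x2) => // y Uy _.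
by rewrite /W2 (mxtrace_mul_coords _ (Mop_in_lie_algebra G_group g_lie Psi_G E1g Uy)).
Qed.
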